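(* Assume the focusing case $0<\mu_1\le\dots\le\mu_n$ (with $n\ge3$). Then there are infinitely many possible bifurcation parameters: for all but finitely many $k\in\mathbb N$, the equation $f(\beta)=\lambda_k$ has a unique solution $\beta\in(-\infty,\bar\beta)$.
   Context: Let $\Omega\subset\mathbb R^N$ ($N\le3$) be a smooth bounded domain whose principal Dirichlet eigenvalue of $-\Delta$ is less than $1$, and $\omega\in H_0^1(\Omega)$ the unique positive solution of $-\Delta\omega-\omega=-\omega^3$. Let $-1=\lambda_1<\lambda_2<\cdots\to\infty$ be the distinct eigenvalues of $-\Delta\psi-\psi=\lambda\omega^2\psi$, $\psi\in H_0^1(\Omega)$. Let $g(\beta)=1+\beta\sum_{j=1}^n\frac1{\mu_j-\beta}$, $f(\beta)=-1-\frac2{g(\beta)}$, and $\bar\beta$ the unique zero of $g$ in $(-\infty,0)$. A possible bifurcation parameter is a $\beta\in(-\infty,\bar\beta)$ with $f(\beta)=\lambda_k$ for some $k$ (equivalently, for which the linearization of the system $-\Delta u_j-u_j=\mu_ju_j^3+\beta\sum_{k\ne j}u_k^2u_j$ at the synchronized solution has nontrivial kernel). *)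

From HB Require Import structures.
From mathcomp Require Import all_boot all_order all_algebra.
From mathcomp Require Import reals.
Set Implicit Arguments. Unset Strict Implicit. Unset Printing Implicit Defensive.
Import Order.TTheory GRing.Theory Num.Theory.
Local Open Scope ring_scope.

Definition gfun (R : realType) (n : nat) (mu : 'I_n -> R) (beta : R) : R :=
  1 + beta * \sum_(j < n) (mu j - beta)^-1.

Definition ffun (R : realType) (n : nat) (mu : 'I_n -> R) (beta : R) : R :=
  - 1 - 2 / gfun mu beta.

(* Abstract properties of the sequence of distinct eigenvalues
   -1 = lambda_1 < lambda_2 < ... -> +oo of -Δψ - ψ = λ ω^2 ψ.
   lam k represents lambda_{k+1} (0-based indexing). *)
Definition distinct_eigen_seq (R : realType) (lam : nat -> R) : Prop :=
  [/\ lam 0%N = -1,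
      (forall k, lam k < lam k.+1) &
      (forall M : R, exists N : nat, forall k, (N <= k)%N -> M < lam k)].

From HB Require Import structures.
From mathcomp Require Import all_boot all_order all_algebra.
From mathcomp Require Import reals.
From mathcomp Require Import all_classical all_analysis.
From mathcomp Require Import ring lra.
Set Implicit Arguments.
Unset Strict Implicit.
Unset Printing Implicit Defensive.
Import Order.TTheory GRing.Theory Num.Theory.
Import numFieldNormedType.Exports.
Local Open Scope ring_scope.

(* On (-oo, 0) the function g is continuous and strictly increasing, and it
   tends to 1 - n at -oo since every term beta / (mu_j - beta) tends to -1.
   Hence g maps (-oo, betabar) bijectively onto (1 - n, 0).  Since
   f(beta) = lambda iff g(beta) = -2 / (lambda + 1), and -2 / (lambda + 1) lies
   in (1 - n, 0) as soon as lambda > -1 + 2 / (n - 1), every eigenvalue beyond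
   that threshold is hit by exactly one beta < betabar. *)

Section GfunOnNegatives.
Variables (R : realType) (n : nat) (mu : 'I_n -> R).
Hypothesis mu_gt0 : forall j, 0 < mu j.

Lemma gfun_continuous (x : R) : x < 0 -> {for x, continuous (gfun mu)}.
Proof.
move=> x_lt0.
have sum_cont (s : seq 'I_n) :
    {for x, continuous (fun b : R => \sum_(j <- s) (mu j - b)^-1)}.
  elim: s => [|a s IHs].
    have -> : (fun b : R => \sum_(j <- [::]) (mu j - b)^-1) = cst 0.
      by apply/funext=> b; rewrite big_nil.
    exact: cvg_cst.
  have -> : (fun b : R => \sum_(j <- a :: s) (mu j - b)^-1) =
      (fun b => (mu a - b)^-1) + (fun b => \sum_(j <- s) (mu j - b)^-1).
    by apply/funext=> b; rewrite big_cons.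
  apply: continuousD => //; apply: continuousV.
    by rewrite subr_eq0 gt_eqF // (lt_trans x_lt0).
  by apply: continuousB; [exact: cvg_cst | exact: cvg_id].
apply: continuousD; first exact: cvg_cst.
by apply: continuousM; [exact: cvg_id | exact: sum_cont].
Qed.

Lemma gfun_lt (a b : R) : (0 < n)%N -> a < b -> b < 0 -> gfun mu a < gfun mu b.
Proof.
move=> n_gt0 ab b_lt0; rewrite /gfun ltrD2l !mulr_sumr.
apply: ltr_sum => [|j _].
  by apply/hasP; exists (Ordinal n_gt0); rewrite ?mem_index_enum.
have := mu_gt0 j => mu_j_gt0.
rewrite ltr_pdivrMr; last lra.
rewrite mulrAC ltr_pdivlMr; [nra | lra].
Qed.

Lemma gfun_inj (x y : R) : (0 < n)%N -> x < 0 -> y < 0 ->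
  gfun mu x = gfun mu y -> x = y.
Proof.
move=> n_gt0 x_lt0 y_lt0 gxy.
case: (ltgtP x y) => // [xy|yx].
  by have := gfun_lt n_gt0 xy y_lt0; rewrite gxy ltxx.
by have := gfun_lt n_gt0 yx x_lt0; rewrite gxy ltxx.
Qed.

Lemma gfun_le_asymptote (a : R) : a < 0 ->
  gfun mu a <= 1 - n%:R + (\sum_(j < n) mu j) / - a.
Proof.
move=> a_lt0; rewrite /gfun mulr_sumr -addrA lerD2l.
rewrite mulr_suml -[n in - n%:R]card_ord -sumr_const -sumrN -big_split /=.
apply: ler_sum => j _; have := mu_gt0 j => mu_j_gt0.
have -> : a * (mu j - a)^-1 = -1 + mu j / (mu j - a).
  by field; rewrite gt_eqF //; lra.
rewrite lerD2l ler_pM2l // lef_pV2 ?posrE; lra.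
Qed.

Lemma gfun_lt_level (b t : R) : b < 0 -> 1 - n%:R < t ->
  exists2 a, a < b & gfun mu a < t.
Proof.
move=> b_lt0 t_gt; set S := \sum_(j < n) mu j; set D := t - (1 - n%:R).
have S_ge0 : 0 <= S by apply: sumr_ge0 => j _; exact/ltW.
have D_gt0 : 0 < D by rewrite subr_gt0.
have SD_ge0 : 0 <= S / D by rewrite divr_ge0 // ltW.
exists (b - 1 - S / D); first lra.
have lt_D : S / (1 - b + S / D) < D.
  rewrite ltr_pdivrMr; last lra.
  by rewrite mulrDr mulrCA mulfV ?gt_eqF // mulr1; nra.
have a_lt0 : b - 1 - S / D < 0 by lra.
have := gfun_le_asymptote a_lt0.
rewrite -/S (_ : - (b - 1 - S / D) = 1 - b + S / D); last by ring.
by move: lt_D; rewrite {2}/D; lra.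
Qed.

Lemma gfun_level_below (b t : R) : b < 0 -> 1 - n%:R < t -> t < gfun mu b ->
  exists2 c, c < b & gfun mu c = t.
Proof.
move=> b_lt0 t_gt t_lt; have [a ab ga] := gfun_lt_level b_lt0 t_gt.
have [c cI gc] : exists2 c, c \in `[a, b] & gfun mu c = t.
  apply: IVT; first exact: ltW.
    apply: continuous_in_subspaceT => x /[!inE] xI.
    by apply: gfun_continuous; apply: le_lt_trans b_lt0; rewrite (itvP xI).
  by rewrite ge_min le_max (ltW ga) (ltW t_lt) orbT.
exists c => //; rewrite lt_neqAle (itvP cI) andbT.
by apply: contraTneq t_lt => cb; rewrite -gc cb ltxx.
Qed.

End GfunOnNegatives.

Definition glevel (R : realType) (l : R) : R := - (2 / (l + 1)).

Lemma ffun_of_glevel (R : realType) n (mu : 'I_n -> R) (beta l : R) :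
  l + 1 != 0 -> gfun mu beta = glevel l -> ffun mu beta = l.
Proof. by move=> l1 gb; rewrite /ffun gb /glevel; field. Qed.

Lemma gfun_of_ffun (R : realType) n (mu : 'I_n -> R) (x y : R) :
  ffun mu x = ffun mu y -> gfun mu x = gfun mu y.
Proof.
have two_neq0 : 2 != 0 :> R by rewrite pnatr_eq0.
rewrite /ffun => /addrI /oppr_inj; rewrite !(mulrC 2).
by move=> /(mulIf two_neq0) /invr_inj.
Qed.

Lemma glevel_bounds (R : realType) (m l : R) : 0 < m -> 2 / m < l + 1 ->
  - m < glevel l < 0.
Proof.
move=> m_gt0 lm; have l1_gt0 : 0 < l + 1 by apply: lt_trans lm; rewrite divr_gt0.
rewrite oppr_lt0 divr_gt0 // andbT ltrN2 ltr_pdivrMr //.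
by rewrite -ltr_pdivrMl // mulrC.
Qed.

Theorem lemma3p3 (R : realType) (n : nat) (mu : 'I_n -> R) (lam : nat -> R)
  (betabar : R) :
  (3 <= n)%N ->
  (forall j, 0 < mu j) ->
  (forall i j : 'I_n, (i <= j)%N -> mu i <= mu j) ->
  distinct_eigen_seq lam ->
  betabar < 0 -> gfun mu betabar = 0 ->
  exists K : nat, forall k : nat, (K <= k)%N ->
    exists! beta : R, beta < betabar /\ ffun mu beta = lam k.
Proof.
move=> n_ge3 mu_gt0 _ [_ _ lam_oo] bb_lt0 g_bb.
have n_gt0 : (0 < n)%N by apply: leq_trans n_ge3.
have m_gt0 : 0 < n%:R - 1 :> R.
  have : 3%:R <= n%:R :> R by rewrite ler_nat.
  lra.
have [N lamN] := lam_oo (-1 + 2 / (n%:R - 1)).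
exists N => k /lamN lamk.
have lamk1 : 2 / (n%:R - 1) < lam k + 1 by lra.
have /andP[t_gt t_lt0] := glevel_bounds m_gt0 lamk1.
rewrite opprB in t_gt; rewrite -g_bb in t_lt0.
have [c c_lt g_c] := gfun_level_below mu_gt0 bb_lt0 t_gt t_lt0.
have f_c : ffun mu c = lam k.
  by apply: ffun_of_glevel => //; rewrite gt_eqF // (lt_trans _ lamk1) // divr_gt0.
exists c; split=> [//|y [y_lt f_y]].
apply: (gfun_inj mu_gt0 n_gt0); [lra | lra | apply: gfun_of_ffun; congruence].
Qed.
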